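(* Let $(\Sigma,\omega_\Sigma)$ be a tropical fan in $N_\mathbb{R}$, let $f$ be a meromorphic function on $\Sigma$, let $\Delta$ be the tropical fan $\operatorname{div}(f)$, and let $\tilde\Sigma$ be the tropical modification of $\Sigma$ with respect to $f$. Then: (1) for each $\delta\in\Delta$, the star fan of $\tilde\Sigma$ at the cone $\Gamma_f(\delta)+\mathbb{R}_{\ge0}\tilde e$ is isomorphic to the star fan $\Delta^\delta$; (2) for each $\sigma\in\Sigma$, the star fan of $\tilde\Sigma$ at the cone $\Gamma_f(\sigma)$ is isomorphic to the tropical modification of $\Sigma^\sigma$ with respect to $f^\sigma$, the meromorphic function induced by $f$ on $\Sigma^\sigma$.
   Context: $N$ is a lattice, $M=\operatorname{Hom}(N,\mathbb{Z})$. A tropical fan $(\Sigma,\omega_\Sigma)$ of dimension $d$ is a rational fan with all maximal cones of dimension $d$ and weights satisfying the balancing condition. For $\sigma\in\Sigma$, $N_\sigma$ is the lattice generated by $\sigma\cap N$, $N^\sigma=N/N_\sigma$, and the star fan $\Sigma^\sigma$ is the tropical fan in $N^\sigma_\mathbb{R}$ formed by images of the cones containing $\sigma$, with induced weights. A meromorphic function $f$ on $\Sigma$ is a continuous function on $|\Sigma|$ which is integral linear on each cone. Its divisor $\Delta=\operatorname{div}(f)$ is the tropical fan of cones $\tau\in\Sigma_{d-1}$ with $\operatorname{ord}_\tau(f)\ne0$ and their faces, with weights $\operatorname{ord}_\tau(f)=-\sum_{\sigma\supset\tau}\omega_\Sigma(\sigma)f_\sigma(n_{\sigma/\tau})+f_\tau(\sum_{\sigma\supset\tau}\omega_\Sigma(\sigma)n_{\sigma/\tau})$,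 where $f_\sigma\in M$ agrees with $f$ on $\sigma$ and $n_{\sigma/\tau}\in N_\sigma$ satisfies $N_\tau+\mathbb{Z}n_{\sigma/\tau}=N_\sigma$, pointing into $\sigma$. The tropical modification $\tilde\Sigma$ is the fan in $N_\mathbb{R}\times\mathbb{R}$ with cones $\Gamma_f(\sigma)=\{(x,f(x)):x\in\sigma\}$, $\sigma\in\Sigma$, and $\Gamma_f(\delta)+\mathbb{R}_{\ge0}\tilde e$, $\delta\in\Delta$, where $\tilde e=(0,1)$; weights $\omega_\Sigma(\sigma)$ and $\omega_\Delta(\delta)$ respectively on maximal cones. For $\sigma\in\Sigma$, choose $\ell\in M$ coinciding with $f$ on $\sigma$; then $f-\ell$ vanishes on $\sigma$ and descends along the projection $N\to N^\sigma$ to a meromorphic function $f^\sigma$ on $\Sigma^\sigma$, well defined up to addition of an integral linear function on $N^\sigma$. *)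

From HB Require Import structures.
From mathcomp Require Import all_boot all_order all_algebra.
From mathcomp Require Import all_classical all_reals.
Set Implicit Arguments. Unset Strict Implicit. Unset Printing Implicit Defensive.
Import Order.TTheory GRing.Theory Num.Theory.
Local Open Scope classical_set_scope.
Local Open Scope ring_scope.

(* Conventions: the lattice N is Z^k sitting inside N_R = R^k ('rV[R]_k, row
   vectors); M = Hom(N,Z) is represented by integral column vectors m : 'cV_k,
   acting by x |-> (x *m m) 0 0.  Cones are subsets of R^k. *)

Section Fans.
Variable R : realType.

Definition intmx m k (A : 'M[R]_(m, k)) := forall i j, A i j \is a Num.int.

Definition lform k (m : 'cV[R]_k) (x : 'rV[R]_k) : R := (x *m m) 0 0.

Definition cone_gen k (s : seq 'rV[R]_k) : set 'rV[R]_k :=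
  [set x | exists c : 'I_(size s) -> R,
     (forall i, 0 <= c i) /\ x = \sum_(i < size s) c i *: s`_i].

Definition rcone k (C : set 'rV[R]_k) :=
  exists s : seq 'rV[R]_k, (forall i : 'I_(size s), intmx s`_i) /\ C = cone_gen s.

Definition pointed k (C : set 'rV[R]_k) := forall x, C x -> C (- x) -> x = 0.

Definition gens_mx k (s : seq 'rV[R]_k) : 'M[R]_(size s, k) :=
  \matrix_(i < size s) s`_i.
Definition has_dim k (C : set 'rV[R]_k) (r : nat) :=
  exists s : seq 'rV[R]_k, C = cone_gen s /\ \rank (gens_mx s) = r.

Definition face k (tau sigma : set 'rV[R]_k) :=
  exists u : 'cV[R]_k, (forall x, sigma x -> 0 <= lform u x) /\
    tau = [set x | sigma x /\ lform u x = 0].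

Definition facet k (tau sigma : set 'rV[R]_k) :=
  face tau sigma /\ exists r, has_dim tau r /\ has_dim sigma r.+1.

Definition fan k (S : set (set 'rV[R]_k)) :=
  [/\ finite_set S,
      (forall C, S C -> rcone C /\ pointed C),
      (forall C D, S C -> face D C -> S D) &
      (forall C D, S C -> S D -> face (C `&` D) C)].

Definition maxc k (S : set (set 'rV[R]_k)) (C : set 'rV[R]_k) :=
  S C /\ forall D, S D -> C `<=` D -> D = C.

Definition latt k (C : set 'rV[R]_k) (x : 'rV[R]_k) :=
  exists s : seq 'rV[R]_k, (forall i : 'I_(size s), C s`_i /\ intmx s`_i) /\
    exists c : 'I_(size s) -> int, x = \sum_(i < size s) s`_i *~ c i.

(* n_{sigma/tau}: N_tau + Z n = N_sigma, n pointing into sigma *)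
Definition nvec k (sigma tau : set 'rV[R]_k) (v : 'rV[R]_k) :=
  [/\ intmx v,
      (forall x, latt sigma x <-> exists y (m : int), latt tau y /\ x = y + v *~ m) &
      exists a b c, [/\ sigma a, tau b, tau c & v = a + b - c]].

Record wfan k := WFan { cones : set (set 'rV[R]_k); wt : set 'rV[R]_k -> int }.

(* cones of codimension one (Sigma_{d-1} for a pure fan) *)
Definition codim1 k (F : wfan k) (tau : set 'rV[R]_k) :=
  cones F tau /\ exists sigma, maxc (cones F) sigma /\ facet tau sigma.

Definition up k (F : wfan k) (tau : set 'rV[R]_k) :=
  [set sigma | maxc (cones F) sigma /\ tau `<=` sigma].

Definition balanced k (F : wfan k) :=
  forall tau, codim1 F tau ->
  forall nv : set 'rV[R]_k -> 'rV[R]_k,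
    (forall sigma, up F tau sigma -> nvec sigma tau (nv sigma)) ->
    latt tau (\sum_(sigma \in up F tau) nv sigma *~ wt F sigma).

Definition tropical_fan k (F : wfan k) (d : nat) :=
  [/\ fan (cones F),
      (forall C, maxc (cones F) C -> has_dim C d) &
      balanced F].

(* meromorphic function: integral linear on each cone (continuity on |Sigma|
   is then automatic) *)
Definition meromorphic k (F : wfan k) (f : 'rV[R]_k -> R) :=
  forall sigma, cones F sigma ->
    exists m : 'cV[R]_k, intmx m /\ forall x, sigma x -> f x = lform m x.

(* ord_tau(f); independent of the choices of n_{sigma/tau} and f_sigma *)
Definition ord k (F : wfan k) (f : 'rV[R]_k -> R) (tau : set 'rV[R]_k) : int :=
  xget 0%R [set z : int | exists (nv : set 'rV[R]_k -> 'rV[R]_k)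
                                (fm : set 'rV[R]_k -> 'cV[R]_k),
    [/\ (forall sigma, up F tau sigma -> nvec sigma tau (nv sigma)),
        (forall sigma, up F tau sigma \/ sigma = tau ->
           intmx (fm sigma) /\ forall x, sigma x -> f x = lform (fm sigma) x) &
        z%:~R = - (\sum_(sigma \in up F tau) (wt F sigma)%:~R * lform (fm sigma) (nv sigma))
                + lform (fm tau) (\sum_(sigma \in up F tau) nv sigma *~ wt F sigma)]].

Definition divf k (F : wfan k) (f : 'rV[R]_k -> R) : wfan k :=
  WFan [set delta | exists tau, [/\ codim1 F tau, ord F f tau != 0 & face delta tau]]
       (ord F f).

Definition graph k (f : 'rV[R]_k -> R) (C : set 'rV[R]_k) : set 'rV[R]_(k + 1) :=
  [set y | exists x, C x /\ y = row_mx x (f x)%:M].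
Definition graph_up k (f : 'rV[R]_k -> R) (C : set 'rV[R]_k) : set 'rV[R]_(k + 1) :=
  [set y | exists x t, [/\ C x, 0 <= t & y = row_mx x (f x + t)%:M]].

Definition modif k (F : wfan k) (f : 'rV[R]_k -> R) : wfan (k + 1) :=
  WFan ([set graph f sigma | sigma in cones F] `|`
        [set graph_up f delta | delta in cones (divf F f)])
       (fun C => \sum_(sigma \in [set sigma | cones F sigma /\ graph f sigma = C]) wt F sigma
               + \sum_(delta \in [set delta | cones (divf F f) delta /\ graph_up f delta = C])
                   wt (divf F f) delta).

Definition img k k' (A : 'M[R]_(k, k')) (C : set 'rV[R]_k) : set 'rV[R]_k' :=
  (fun x => x *m A) @` C.

(* p : N -> Z^k' realizes the quotient N -> N^sigma = N / N_sigma *)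
Definition qmap k k' (sigma : set 'rV[R]_k) (p : 'M[R]_(k, k')) :=
  [/\ intmx p,
      (forall y : 'rV[R]_k', intmx y -> exists x, intmx x /\ x *m p = y) &
      (forall x : 'rV[R]_k, intmx x -> (x *m p = 0 <-> latt sigma x))].

(* star fan at sigma, realized in N^sigma_R ~ R^k' via p *)
Definition star k k' (F : wfan k) (sigma : set 'rV[R]_k) (p : 'M[R]_(k, k')) : wfan k' :=
  WFan [set img p tau | tau in [set tau | cones F tau /\ sigma `<=` tau]]
       (fun C => \sum_(tau \in [set tau | [/\ cones F tau, sigma `<=` tau & img p tau = C]])
                   wt F tau).

Definition fan_iso k k' (F : wfan k) (G : wfan k') :=
  exists (A : 'M[R]_(k, k')) (B : 'M[R]_(k', k)),
    [/\ intmx A /\ intmx B, A *m B = 1%:M, B *m A = 1%:M,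
        cones G = [set img A C | C in cones F] &
        forall C, maxc (cones F) C -> wt G (img A C) = wt F C].

End Fans.

From HB Require Import structures.
From mathcomp Require Import all_boot all_order all_algebra.
From mathcomp Require Import all_classical all_reals.
From mathcomp Require Import zify lra.
Import Order.TTheory GRing.Theory Num.Theory.
Local Open Scope classical_set_scope.
Local Open Scope ring_scope.

Set Implicit Arguments. Unset Strict Implicit. Unset Printing Implicit Defensive.

(* Both isomorphisms are induced by integral linear maps that kill the lattice
   of the cone at which the star is taken, hence descend to the quotient
   lattice.  For (1) the map is (x, y) |-> x: the cones of the modification
   containing Gamma_f(delta) + R e are exactly the Gamma_f(delta') + R e with
   delta' a cone of div(f) containing delta, since graphs never contain e.
   For (2) it is the shear (x, y) |-> (x, y - l(x)) followed by the quotient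
   by N_sigma, which maps Gamma_f(tau) onto Gamma_{f^sigma}(tau/sigma) and
   Gamma_f(delta) + R e onto Gamma_{f^sigma}(delta/sigma) + R e.  The only
   non-formal point is that orders of vanishing are preserved: the quotient
   map identifies the balancing data of F at tau (normal vectors and local
   linear forms, shifted by l) with those of the star fan at tau/sigma, and
   ord_tau(f) does not change when a global linear form is subtracted. *)

Section IntegralMatrices.
Variable R : realType.

Lemma intmx_mul m k l (A : 'M[R]_(m, k)) (B : 'M[R]_(k, l)) :
  intmx A -> intmx B -> intmx (A *m B).
Proof. by move=> hA hB i j; rewrite mxE rpred_sum // => r _; apply: rpredM. Qed.

Lemma intmxD m k (A B : 'M[R]_(m, k)) : intmx A -> intmx B -> intmx (A + B).
Proof. by move=> hA hB i j; rewrite mxE rpredD. Qed.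

Lemma intmxN m k (A : 'M[R]_(m, k)) : intmx A -> intmx (- A).
Proof. by move=> hA i j; rewrite mxE rpredN. Qed.

Lemma intmxB m k (A B : 'M[R]_(m, k)) : intmx A -> intmx B -> intmx (A - B).
Proof. by move=> hA hB; apply: intmxD => //; apply: intmxN. Qed.

Lemma intmx0 m k : intmx (0 : 'M[R]_(m, k)).
Proof. by move=> i j; rewrite mxE rpred0. Qed.

Lemma intmx_scalar m (a : R) : a \is a Num.int -> intmx (a%:M : 'M[R]_m).
Proof. by move=> ha i j; rewrite mxE; case: (i == j); rewrite ?mulr1n ?mulr0n ?rpred0. Qed.

Lemma intmx1 m : intmx (1%:M : 'M[R]_m).
Proof. by apply: intmx_scalar; rewrite rpred1. Qed.

Lemma intmx_delta m k i j : intmx (delta_mx i j : 'M[R]_(m, k)).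
Proof. by move=> a b; rewrite mxE; case: (_ && _); rewrite ?rpred0 ?rpred1. Qed.

Lemma intmxMz m k (A : 'M[R]_(m, k)) z : intmx A -> intmx (A *~ z).
Proof. by move=> hA i j; rewrite -scaler_int mxE mulrzl rpredMz. Qed.

Lemma intmx_row_mx m k1 k2 (A : 'M[R]_(m, k1)) (B : 'M[R]_(m, k2)) :
  intmx A -> intmx B -> intmx (row_mx A B).
Proof. by move=> hA hB i j; rewrite mxE; case: splitP. Qed.

Lemma intmx_col_mx m1 m2 k (A : 'M[R]_(m1, k)) (B : 'M[R]_(m2, k)) :
  intmx A -> intmx B -> intmx (col_mx A B).
Proof. by move=> hA hB i j; rewrite mxE; case: splitP. Qed.

Lemma intmx_block m1 m2 k1 k2 (A : 'M[R]_(m1, k1)) (B : 'M[R]_(m1, k2))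
    (C : 'M[R]_(m2, k1)) (D : 'M[R]_(m2, k2)) :
  intmx A -> intmx B -> intmx C -> intmx D -> intmx (block_mx A B C D).
Proof. by move=> *; rewrite block_mxEv; apply: intmx_col_mx; apply: intmx_row_mx. Qed.

Lemma intmx_lsubmx m k1 k2 (A : 'M[R]_(m, k1 + k2)) : intmx A -> intmx (lsubmx A).
Proof. by move=> hA i j; rewrite mxE. Qed.

Lemma intmx_rsubmx m k1 k2 (A : 'M[R]_(m, k1 + k2)) : intmx A -> intmx (rsubmx A).
Proof. by move=> hA i j; rewrite mxE. Qed.

Lemma mulmxMz m k l (A : 'M[R]_(m, k)) (B : 'M[R]_(k, l)) z :
  (A *~ z) *m B = (A *m B) *~ z.
Proof. by rewrite -!scaler_int scalemxAl. Qed.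

Lemma eq_mx_intmx m l (P Q : 'M[R]_(m, l)) :
  (forall y : 'rV_m, intmx y -> y *m P = y *m Q) -> P = Q.
Proof.
by move=> h; apply/row_matrixP => i; rewrite !rowE; apply: h; apply: intmx_delta.
Qed.

End IntegralMatrices.

Section LinearForms.
Variables (R : realType) (k : nat).
Implicit Types (m : 'cV[R]_k) (x y : 'rV[R]_k).

Lemma lformE m x : x *m m = (lform m x)%:M.
Proof. exact: mx11_scalar. Qed.

Lemma lformD m x y : lform m (x + y) = lform m x + lform m y.
Proof. by rewrite /lform mulmxDl mxE. Qed.

Lemma lform0 m : lform m 0 = 0.
Proof. by rewrite /lform mul0mx mxE. Qed.

Lemma lformMz m x z : lform m (x *~ z) = lform m x *~ z.
Proof. by rewrite /lform -[x *~ z]scaler_int -scalemxAl mxE mulrzl. Qed.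

Lemma lform_sum m I (r : seq I) (P : pred I) (F : I -> 'rV_k) :
  lform m (\sum_(i <- r | P i) F i) = \sum_(i <- r | P i) lform m (F i).
Proof. by rewrite /lform mulmx_suml summxE. Qed.

Lemma lformDm m1 m2 x : lform (m1 + m2) x = lform m1 x + lform m2 x.
Proof. by rewrite /lform mulmxDr mxE. Qed.

Lemma lformBm m1 m2 x : lform (m1 - m2) x = lform m1 x - lform m2 x.
Proof. by rewrite /lform mulmxBr !mxE. Qed.

Lemma lform_mulmx l (A : 'M[R]_(k, l)) (u : 'cV[R]_l) x :
  lform (A *m u) x = lform u (x *m A).
Proof. by rewrite /lform mulmxA. Qed.

Lemma lform_int m x : intmx m -> intmx x -> lform m x \is a Num.int.
Proof. by move=> hm hx; apply: intmx_mul. Qed.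

End LinearForms.

Section Cones.
Variable R : realType.

Lemma gens_row k (s : seq 'rV[R]_k) i : row i (gens_mx s) = s`_i.
Proof. by rewrite rowK. Qed.

Lemma mul_gens k (s : seq 'rV[R]_k) (w : 'rV_(size s)) :
  w *m gens_mx s = \sum_(i < size s) w 0 i *: s`_i.
Proof. by rewrite mulmx_sum_row; apply: eq_bigr => i _; rewrite gens_row. Qed.

Lemma cone_gen0 k (s : seq 'rV[R]_k) : cone_gen s 0.
Proof. by exists (fun=> 0); split=> //; rewrite big1 // => i _; rewrite scale0r. Qed.

Lemma cone_gen_nth k (s : seq 'rV[R]_k) (i : 'I_(size s)) : cone_gen s s`_i.
Proof.
exists (fun j => (j == i)%:R); split=> [j|]; first by case: (j == i).
rewrite (bigD1 i) //= eqxx scale1r big1 ?addr0 // => j /negbTE ->.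
by rewrite scale0r.
Qed.

Lemma cone_genD k (s : seq 'rV[R]_k) a b :
  cone_gen s a -> cone_gen s b -> cone_gen s (a + b).
Proof.
move=> [c [c0 ->]] [c' [c0' ->]]; exists (fun i => c i + c' i); split.
  by move=> i; rewrite addr_ge0.
by rewrite -big_split; apply: eq_bigr => i _; rewrite scalerDl.
Qed.

Lemma cone_gen_submx k (s : seq 'rV[R]_k) x : cone_gen s x -> (x <= gens_mx s)%MS.
Proof.
move=> [c [_ ->]]; apply: summx_sub => i _; apply: scalemx_sub.
by rewrite -gens_row row_sub.
Qed.

Lemma cone_gen_subset_submx k (s1 s2 : seq 'rV[R]_k) :
  cone_gen s1 `<=` cone_gen s2 -> (gens_mx s1 <= gens_mx s2)%MS.
Proof.
move=> h; apply/row_subP => i; rewrite gens_row; apply: cone_gen_submx; apply: h.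
exact: cone_gen_nth.
Qed.

Lemma span_cone_genB k (s : seq 'rV[R]_k) x : (x <= gens_mx s)%MS ->
  exists a b, [/\ cone_gen s a, cone_gen s b & x = a - b].
Proof.
move=> /submxP [w ->]; rewrite mul_gens.
exists (\sum_(i < size s) Num.max (w 0 i) 0 *: s`_i).
exists (\sum_(i < size s) Num.max (- w 0 i) 0 *: s`_i); split.
- by exists (fun i => Num.max (w 0 i) 0); split=> // i; rewrite le_max lexx orbT.
- by exists (fun i => Num.max (- w 0 i) 0); split=> // i; rewrite le_max lexx orbT.
rewrite -sumrB; apply: eq_bigr => i _; rewrite -scalerBl; congr (_ *: _).
case: (leP (w 0 i) 0) => h.
  by rewrite (max_l (_ : 0 <= - w 0 i)) ?oppr_ge0 // sub0r opprK.
by rewrite (max_r (_ : - w 0 i <= 0)) ?subr0 // oppr_le0 ltW.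
Qed.

Lemma cone_gen_rank k (s1 s2 : seq 'rV[R]_k) :
  cone_gen s1 = cone_gen s2 -> \rank (gens_mx s1) = \rank (gens_mx s2).
Proof. by move=> e; apply/eqP; rewrite eqn_leq !mxrankS // cone_gen_subset_submx // e. Qed.

Lemma has_dimE k (S : set 'rV[R]_k) s r : S = cone_gen s ->
  (has_dim S r <-> r = \rank (gens_mx s)).
Proof.
move=> ->; split; last by move=> ->; exists s.
by move=> [s' [e <-]]; apply: cone_gen_rank.
Qed.

Lemma cone_genE k (s : seq 'rV[R]_k) y : cone_gen s y <->
  exists c : nat -> R, (forall i, 0 <= c i) /\ y = \sum_(i < size s) c i *: s`_i.
Proof.
split; last by move=> [c [c0 ->]]; exists (fun i => c i).
move=> [c [c0 ->]].
exists (fun i => if @insub _ (fun j => (j < size s)%N) 'I_(size s) i is Some j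
                 then c j else 0).
split; first by move=> i; case: insub => // j; apply: c0.
by apply: eq_bigr => i _; rewrite valK.
Qed.

Lemma img_cone_gen k l (A : 'M[R]_(k, l)) (s : seq 'rV[R]_k) :
  img A (cone_gen s) = cone_gen [seq w *m A | w <- s].
Proof.
have sumA (c : nat -> R) : (\sum_(i < size s) c i *: s`_i) *m A =
    \sum_(i < size [seq w *m A | w <- s]) c i *: [seq w *m A | w <- s]`_i.
  rewrite size_map mulmx_suml; apply: eq_bigr => i _.
  by rewrite (nth_map 0) // -scalemxAl.
apply/seteqP; split=> y.
  by move=> [x /cone_genE [c [c0 ->]] <-]; apply/cone_genE; exists c; rewrite sumA.
move=> /cone_genE [c [c0 ->]]; exists (\sum_(i < size s) c i *: s`_i) => //.
by apply/cone_genE; exists c.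
Qed.

Lemma rank_gens_map k l (A : 'M[R]_(k, l)) (s : seq 'rV[R]_k) :
  \rank (gens_mx [seq w *m A | w <- s]) = \rank (gens_mx s *m A).
Proof.
apply/eqP; rewrite eqn_leq !mxrankS //; apply/row_subP => i.
  rewrite row_mul gens_row.
  have hi : (i < size [seq w *m A | w <- s])%N by rewrite size_map.
  by rewrite -(nth_map 0 0 (fun w : 'rV[R]_k => w *m A)) // -(gens_row (Ordinal hi)) row_sub.
rewrite gens_row; have hi : (i < size s)%N by rewrite -(size_map (fun w : 'rV[R]_k => w *m A)).
by rewrite (nth_map 0) // -(gens_row (s := s) (Ordinal hi)) -row_mul row_sub.
Qed.

Lemma has_dim_img k l (A : 'M[R]_(k, l)) (s : seq 'rV[R]_k) r :
  has_dim (img A (cone_gen s)) r <-> r = \rank (gens_mx s *m A).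
Proof. by rewrite -rank_gens_map; apply: has_dimE; rewrite img_cone_gen. Qed.

End Cones.

Section Lattices.
Variable R : realType.

Lemma lattE k (C : set 'rV[R]_k) x : latt C x <->
  exists t : seq ('rV[R]_k * int), (forall q, q \in t -> C q.1 /\ intmx q.1) /\
     x = \sum_(q <- t) q.1 *~ q.2.
Proof.
split=> [[s [hs [c ->]]]|[t [ht ->]]].
  exists [seq (s`_i, c i) | i : 'I_(size s) <- index_enum 'I_(size s)]; split.
    by move=> q /mapP [i _ ->]; apply: hs.
  by rewrite big_map.
exists (map fst t); split.
  move=> i; have := ltn_ord i; rewrite [X in (_ < X)%N]size_map => hi.
  by rewrite (nth_map (0, 0%Z)) //; apply: ht; apply: mem_nth.
exists (fun i => (nth (0, 0%Z) t i).2).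
rewrite (big_nth (0, 0%Z)).
rewrite -(big_mkord xpredT (fun i : nat => (map fst t)`_i *~ (nth (0, 0%Z) t i).2)).
rewrite size_map; apply: eq_big_nat => i /andP [_ hi].
by rewrite (nth_map (0, 0%Z)).
Qed.

Lemma latt_ind k (C : set 'rV[R]_k) (P : 'rV[R]_k -> Prop) :
  P 0 -> (forall a b, P a -> P b -> P (a + b)) -> (forall a z, P a -> P (a *~ z)) ->
  (forall x, C x -> intmx x -> P x) -> forall x, latt C x -> P x.
Proof.
move=> P0 PD PZ Pb x /lattE [t [ht ->]].
elim: t ht => [|q t IH] ht; first by rewrite big_nil.
rewrite big_cons; apply: PD.
  by have [h1 h2] := ht q (mem_head _ _); apply: PZ; apply: Pb.
by apply: IH => q' hq'; apply: ht; rewrite in_cons hq' orbT.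
Qed.

Lemma latt0 k (C : set 'rV[R]_k) : latt C 0.
Proof. by apply/lattE; exists [::]; rewrite big_nil. Qed.

Lemma latt_pt k (C : set 'rV[R]_k) x : C x -> intmx x -> latt C x.
Proof.
move=> h1 h2; apply/lattE; exists [:: (x, 1%Z)]; split.
  by move=> q; rewrite inE => /eqP ->.
by rewrite big_cons big_nil addr0 mulr1z.
Qed.

Lemma lattD k (C : set 'rV[R]_k) a b : latt C a -> latt C b -> latt C (a + b).
Proof.
move=> /lattE [t1 [h1 ->]] /lattE [t2 [h2 ->]]; apply/lattE.
exists (t1 ++ t2); split; last by rewrite big_cat.
by move=> q; rewrite mem_cat => /orP [] ?; [apply: h1 | apply: h2].
Qed.

Lemma lattMz k (C : set 'rV[R]_k) a z : latt C a -> latt C (a *~ z).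
Proof.
move=> /lattE [t [h ->]]; apply/lattE.
exists [seq (q.1, (q.2 * z)%R) | q <- t]; split.
  by move=> q /mapP [q' hq' ->] /=; apply: h.
by rewrite big_map mulrz_suml; apply: eq_bigr => q _; rewrite mulrzA.
Qed.

Lemma lattN k (C : set 'rV[R]_k) a : latt C a -> latt C (- a).
Proof. by move=> h; rewrite -mulrN1z; apply: lattMz. Qed.

Lemma lattB k (C : set 'rV[R]_k) a b : latt C a -> latt C b -> latt C (a - b).
Proof. by move=> ha hb; apply: lattD => //; apply: lattN. Qed.

Lemma lattS k (C D : set 'rV[R]_k) x : C `<=` D -> latt C x -> latt D x.
Proof.
move=> hCD; apply: latt_ind; [exact: latt0|exact: lattD|exact: lattMz|].
by move=> y hy hi; apply: latt_pt => //; apply: hCD.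
Qed.

Lemma latt_intmx k (C : set 'rV[R]_k) x : latt C x -> intmx x.
Proof. by apply: latt_ind; [exact: intmx0|exact: intmxD|exact: intmxMz|]. Qed.

Lemma latt_submx k (s : seq 'rV[R]_k) x :
  latt (cone_gen s) x -> (x <= gens_mx s)%MS.
Proof.
apply: (latt_ind (P := fun y => (y <= gens_mx s)%MS)) => [|a b|a z|y hy _].
- exact: sub0mx.
- exact: addmx_sub.
- by rewrite -scaler_int; apply: scalemx_sub.
- exact: cone_gen_submx.
Qed.

Lemma latt_mulmx k l (C : set 'rV[R]_k) (D : set 'rV[R]_l) (A : 'M[R]_(k, l)) x :
  (forall y, C y -> intmx y -> latt D (y *m A)) -> latt C x -> latt D (x *m A).
Proof.
move=> h; apply: (latt_ind (P := fun y => latt D (y *m A))) => [|a b ha hb|a z ha|//].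
- by rewrite mul0mx; apply: latt0.
- by rewrite mulmxDl; apply: lattD.
- by rewrite -scaler_int -scalemxAl scaler_int; apply: lattMz.
Qed.

Lemma latt_mulmx0 k l (C : set 'rV[R]_k) (A : 'M[R]_(k, l)) x :
  (forall y, C y -> intmx y -> y *m A = 0) -> latt C x -> x *m A = 0.
Proof.
move=> h; apply: (latt_ind (P := fun y => y *m A = 0)) => [|a b ha hb|a z ha|//].
- by rewrite mul0mx.
- by rewrite mulmxDl ha hb addr0.
- by rewrite -scaler_int -scalemxAl ha scaler0.
Qed.

Lemma intmx_span_latt k (s : seq 'rV[R]_k) z :
  (forall i : 'I_(size s), intmx s`_i) -> (z <= gens_mx s)%MS -> intmx z ->
  latt (cone_gen s) z.
Proof.
move=> hs /submxP [w ez] hz.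
pose m i := Num.floor (w 0 i).
have hsum : latt (cone_gen s) (\sum_(i < size s) s`_i *~ m i).
  apply: (big_ind (latt (cone_gen s))); [exact: latt0|exact: lattD|].
  by move=> i _; apply/lattMz/latt_pt => //; apply: cone_gen_nth.
have hfrac : latt (cone_gen s) (z - \sum_(i < size s) s`_i *~ m i).
  apply: latt_pt.
    rewrite ez mul_gens -sumrB.
    exists (fun i => w 0 i - (m i)%:~R); split.
      by move=> i; rewrite subr_ge0 floor_le.
    by apply: eq_bigr => i _; rewrite scalerBl scaler_int.
  by apply: intmxB => //; apply: latt_intmx hsum.
by have := lattD hfrac hsum; rewrite subrK.
Qed.

End Lattices.

Section QuotientMaps.
Variables (R : realType) (k l : nat) (C : set 'rV[R]_k) (p : 'M[R]_(k, l)).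
Hypothesis hp : qmap C p.

Lemma qmap_latt_ker x : latt C x -> x *m p = 0.
Proof. by move=> hx; case: hp => _ _ hk; apply/(hk _ (latt_intmx hx)). Qed.

Lemma qmap_ker_latt x : intmx x -> x *m p = 0 -> latt C x.
Proof. by move=> hx h0; case: hp => _ _ hk; apply/(hk _ hx). Qed.

Lemma qmap_section : exists Y : 'M[R]_(l, k), intmx Y /\ Y *m p = 1%:M.
Proof.
case: hp => _ hs _.
have lift (i : 'I_l) : exists x : 'rV_k, intmx x /\ x *m p = delta_mx 0 i.
  by apply: hs; apply: intmx_delta.
have [Y hY] := choice lift.
exists (\matrix_i Y i); split; first by move=> i j; rewrite mxE; apply: (hY i).1.
by apply/row_matrixP => i; rewrite row_mul rowK (hY i).2 rowE mulmx1.
Qed.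

Variable Y : 'M[R]_(l, k).
Hypotheses (hY : intmx Y) (hYp : Y *m p = 1%:M).

Lemma qmap_section_latt x : intmx x -> latt C (x *m p *m Y - x).
Proof.
move=> hx; apply: qmap_ker_latt; last by rewrite mulmxBl -!mulmxA hYp mulmx1 subrr.
by apply: intmxB => //; apply: intmx_mul => //; apply: intmx_mul => //; case: hp.
Qed.

Lemma qmap_factor m (M : 'M[R]_(k, m)) :
  (forall y, latt C y -> y *m M = 0) -> p *m (Y *m M) = M.
Proof.
move=> hM; apply: eq_mx_intmx => y hy; apply/eqP.
by rewrite !mulmxA -subr_eq0 -mulmxBl hM //; apply: qmap_section_latt.
Qed.

End QuotientMaps.

Section QuotientOfCone.
Variables (R : realType) (k l : nat) (s : seq 'rV[R]_k) (p : 'M[R]_(k, l)).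
Hypotheses (hp : qmap (cone_gen s) p) (hs : forall i : 'I_(size s), intmx s`_i).

Lemma qmap_span_ker (x : 'rV[R]_k) : (x <= gens_mx s)%MS -> x *m p = 0.
Proof.
move=> /submxP [w ->]; rewrite -mulmxA.
suff -> : gens_mx s *m p = 0 by rewrite mulmx0.
apply/row_matrixP => i; rewrite row_mul gens_row row0.
by apply: (qmap_latt_ker hp); apply: latt_pt (cone_gen_nth _) (hs i).
Qed.

Lemma qmap_ker_span (x : 'rV[R]_k) : x *m p = 0 -> (x <= gens_mx s)%MS.
Proof.
move=> hx; have [Y [hY hYp]] := qmap_section hp.
have hQ : (1%:M - p *m Y <= gens_mx s)%MS.
  apply/row_subP => i; rewrite rowE mulmxBr mulmx1 mulmxA -opprB.
  by apply/latt_submx/lattN/qmap_section_latt => //; apply: intmx_delta.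
have -> : x = x *m (1%:M - p *m Y) by rewrite mulmxBr mulmx1 mulmxA hx mul0mx subr0.
exact: submx_trans (submxMl _ _) hQ.
Qed.

Lemma kermx_qmap : (kermx p == gens_mx s)%MS.
Proof.
apply/andP; split.
  by apply/row_subP => i; apply: qmap_ker_span; rewrite -row_mul mulmx_ker row0.
by apply/sub_kermxP/row_matrixP => i; rewrite row_mul row0 qmap_span_ker ?row_sub.
Qed.

End QuotientOfCone.

Lemma fsbig_unique (T : choiceType) (V : nmodType) (U : set T) (a : T) (G : T -> V) :
  U a -> (forall x, U x -> x = a) -> \sum_(x \in U) G x = G a.
Proof.
move=> ha hU; rewrite (_ : U = [set a]) ?fsbig_set1 //.
by apply/seteqP; split=> x //= hx; [apply: hU|rewrite hx].
Qed.

Lemma fsbig_empty (T : choiceType) (V : nmodType) (U : set T) (G : T -> V) :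
  (forall x, ~ U x) -> \sum_(x \in U) G x = 0.
Proof.
move=> hU; rewrite (_ : U = set0) ?fsbig_set0 //.
by apply/seteqP; split=> x //= hx; case: (hU x).
Qed.

Section StarIsomorphism.
Variable R : realType.

Lemma img_comp k l m (A : 'M[R]_(k, l)) (B : 'M[R]_(l, m)) C :
  img B (img A C) = img (A *m B) C.
Proof.
apply/seteqP; split=> y; first by move=> [z [x hx <-] <-]; exists x => //; rewrite mulmxA.
by move=> [x hx <-]; exists (x *m A); [exists x|rewrite mulmxA].
Qed.

Lemma imgS k l (A : 'M[R]_(k, l)) C D : C `<=` D -> img A C `<=` img A D.
Proof. by move=> h y [x hx <-]; exists x => //; apply: h. Qed.

Lemma wt_star_inj k l (G : wfan R k) S (p : 'M[R]_(k, l)) T :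
  cones G T -> S `<=` T ->
  (forall T', cones G T' -> S `<=` T' -> img p T' = img p T -> T' = T) ->
  wt (star G S p) (img p T) = wt G T.
Proof.
move=> hT sT inj; rewrite /= (@fsbig_unique _ _ _ T) => [//||T' [hT' sT' e]].
  by split.
exact: inj.
Qed.

(* Since M kills N_S it factors as p (Y M) for any integral section Y of p;
   the inverse is C p because M C is the identity modulo N_S. *)
Lemma star_fan_iso k l m (G : wfan R k) (G' : wfan R m) S (p : 'M[R]_(k, l))
    (M : 'M[R]_(k, m)) (C : 'M[R]_(m, k)) :
  qmap S p -> intmx M -> intmx C ->
  (forall y, latt S y -> y *m M = 0) -> C *m M = 1%:M ->
  (forall y, intmx y -> latt S (y *m M *m C - y)) ->
  (forall T T', cones G T -> S `<=` T -> cones G T' -> S `<=` T' ->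
     img M T' = img M T -> T' = T) ->
  cones G' = [set img M T | T in [set T | cones G T /\ S `<=` T]] ->
  (forall T, cones G T -> S `<=` T -> wt G' (img M T) = wt G T) ->
  fan_iso (star G S p) G'.
Proof.
move=> hp hM hC killM hCM hMC injM conesG' wtG'.
have [Y [hY hYp]] := qmap_section hp.
have hpA := qmap_factor hp hY hYp killM.
have hMCp : M *m (C *m p) = p.
  apply: (@eq_mx_intmx R) => y hy; apply/eqP; rewrite -subr_eq0 !mulmxA -mulmxBl.
  by rewrite (qmap_latt_ker hp (hMC y hy)).
exists (Y *m M), (C *m p); split.
- by split; apply: intmx_mul => //; case: hp.
- by rewrite -mulmxA hMCp hYp.
- by rewrite -mulmxA hpA hCM.
- by rewrite conesG' /= image_comp; apply: eq_imagel => T _; rewrite /= img_comp hpA.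
- move=> _ [[T [hT sT] <-] _]; rewrite img_comp hpA wtG' // wt_star_inj // => T' hT' sT' e.
  by apply: injM => //; rewrite -hpA -!img_comp e.
Qed.

End StarIsomorphism.

Section Graphs.
Variables (R : realType) (n : nat).
Implicit Types (f : 'rV[R]_n -> R) (C D : set 'rV[R]_n).

Definition etilde : 'rV[R]_(n + 1) := row_mx 0 1%:M.

Lemma graph_pt f C x : C x -> graph f C (row_mx x (f x)%:M).
Proof. by move=> hx; exists x. Qed.

Lemma graph_up_pt f C x t : C x -> 0 <= t -> graph_up f C (row_mx x (f x + t)%:M).
Proof. by move=> hx ht; exists x, t. Qed.

Lemma graph_subset f C D : graph f C `<=` graph f D <-> C `<=` D.
Proof.
split=> h; last by move=> _ [x [hx ->]]; exists x; split=> //; apply: h.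
by move=> x /(graph_pt f) /h [x' [hx' /eq_row_mx [-> _]]].
Qed.

Lemma graph_up_subset f C D : graph_up f C `<=` graph_up f D <-> C `<=` D.
Proof.
split=> h; last by move=> _ [x [t [hx ht ->]]]; exists x, t; split=> //; apply: h.
move=> x hx; have := h _ (graph_up_pt f hx (lexx 0)).
by move=> [x' [t [hx' _ /eq_row_mx [-> _]]]].
Qed.

Lemma graph_graph_up_subset f C D : graph f C `<=` graph_up f D <-> C `<=` D.
Proof.
split=> h; last by move=> _ [x [hx ->]]; exists x, 0; split; [apply: h| |rewrite addr0].
by move=> x /(graph_pt f) /h [x' [t [hx' _ /eq_row_mx [-> _]]]].
Qed.

Lemma graph_inj f C D : graph f C = graph f D -> C = D.
Proof. by move=> e; apply/seteqP; split; apply/(graph_subset f); rewrite e. Qed.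

Lemma graph_up_inj f C D : graph_up f C = graph_up f D -> C = D.
Proof. by move=> e; apply/seteqP; split; apply/(graph_up_subset f); rewrite e. Qed.

Lemma etilde_graph_up f C : C 0 -> f 0 = 0 -> graph_up f C etilde.
Proof. by move=> h0 f0; exists 0, 1; split=> //; rewrite f0 add0r. Qed.

Lemma etilde_notin_graph f C : f 0 = 0 -> ~ graph f C etilde.
Proof.
move=> f0 [x [hx /eq_row_mx [ex]]]; rewrite -ex f0.
by move=> /(congr1 (fun M : 'M[R]_1 => M 0 0)); rewrite !mxE /= => /eqP; rewrite oner_eq0.
Qed.

Lemma graph_up_not_subset_graph f C D : C 0 -> f 0 = 0 -> ~ graph_up f C `<=` graph f D.
Proof. by move=> h0 f0 h; apply: (etilde_notin_graph (C := D) f0); apply/h/etilde_graph_up. Qed.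

Lemma graph_up_neq_graph f C D : C 0 -> f 0 = 0 -> graph_up f C <> graph f D.
Proof.
by move=> h0 f0 e; apply: (graph_up_not_subset_graph h0 f0); rewrite e; apply: subset_refl.
Qed.

Lemma latt_etilde f C a : C 0 -> f 0 = 0 -> a \is a Num.int ->
  latt (graph_up f C) (row_mx 0 a%:M).
Proof.
move=> h0 f0 /intrP [z ->].
have -> : row_mx 0 (z%:~R)%:M = etilde *~ z.
  by rewrite /etilde -scaler_int scale_row_mx scaler0 scalemx1.
apply/lattMz/latt_pt; first exact: etilde_graph_up.
by apply: intmx_row_mx; [apply: intmx0|apply: intmx1].
Qed.

Lemma latt_graph_up f C (m : 'cV[R]_n) u a :
  intmx m -> (forall x, C x -> f x = lform m x) -> C 0 ->
  latt C u -> a \is a Num.int -> latt (graph_up f C) (row_mx u a%:M).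
Proof.
move=> hm hfm h0 hu ha; have f0 : f 0 = 0 by rewrite hfm ?lform0.
have -> : row_mx u a%:M = u *m row_mx 1%:M 0 + row_mx 0 a%:M.
  by rewrite mul_mx_row mulmx1 mulmx0 add_row_mx addr0 add0r.
apply: lattD; last exact: latt_etilde.
apply: latt_mulmx hu => x hx hix; rewrite mul_mx_row mulmx1 mulmx0.
have hfx : f x \is a Num.int by rewrite hfm //; apply: lform_int.
have -> : row_mx x 0 = row_mx x (f x + 0)%:M - row_mx 0 (f x)%:M.
  by rewrite opp_row_mx add_row_mx subr0 addr0 subrr.
apply: lattB; last exact: latt_etilde.
apply: latt_pt; first exact: graph_up_pt.
by apply: intmx_row_mx => //; apply: intmx_scalar; rewrite addr0.
Qed.

Lemma latt_graph f C (l : 'cV[R]_n) u :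
  intmx l -> (forall x, C x -> f x = lform l x) ->
  latt C u -> latt (graph f C) (row_mx u (u *m l)).
Proof.
move=> hl hfl hu; have -> : row_mx u (u *m l) = u *m row_mx 1%:M l.
  by rewrite mul_mx_row mulmx1.
apply: latt_mulmx hu => x hx hix; rewrite mul_mx_row mulmx1 lformE -hfl //.
apply: latt_pt; first exact: graph_pt.
by apply: intmx_row_mx => //; apply: intmx_scalar; rewrite hfl //; apply: lform_int.
Qed.

End Graphs.

Lemma face_subset (R : realType) k (D C : set 'rV[R]_k) : face D C -> D `<=` C.
Proof. by move=> [u [_ ->]] x []. Qed.

Lemma face0 (R : realType) k (D C : set 'rV[R]_k) : face D C -> C 0 -> D 0.
Proof. by move=> [u [_ ->]] h0; split=> //; apply: lform0. Qed.

Section Fans.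
Variables (R : realType) (n : nat) (F : wfan R n).
Hypothesis hF : fan (cones F).

Lemma fan_cone_gen C : cones F C ->
  exists2 s, (forall i : 'I_(size s), intmx s`_i) & C = cone_gen s.
Proof. by case: hF => _ h _ _ /h [[s [hs ->]] _]; exists s. Qed.

Lemma fan_face C D : cones F C -> face D C -> cones F D.
Proof. by case: hF => _ _ h _; apply: h. Qed.

Lemma fan_cone0 C : cones F C -> C 0.
Proof. by move=> /fan_cone_gen [s _ ->]; apply: cone_gen0. Qed.

Lemma fan_coneD C a b : cones F C -> C a -> C b -> C (a + b).
Proof. by move=> /fan_cone_gen [s _ ->]; apply: cone_genD. Qed.

Lemma fan_cone_ker k (p : 'M[R]_(n, k)) C x : cones F C -> qmap C p -> C x -> x *m p = 0.
Proof.
move=> /fan_cone_gen [s hs ->] hp hx.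
by apply: qmap_span_ker hp hs _ (cone_gen_submx hx).
Qed.

Lemma up_finite t : finite_set (up F t).
Proof. by case: hF => hfin _ _ _; apply: sub_finite_set hfin => s [[]]. Qed.

Lemma cones_divf f D : cones (divf F f) D -> cones F D.
Proof. by move=> [tau [[htau _] _ hD]]; apply: fan_face hD. Qed.

Lemma meromorphic0 f C : meromorphic F f -> cones F C -> f 0 = 0.
Proof.
move=> hf hC; have [m [_ ->]] := hf _ hC; first exact: lform0.
exact: fan_cone0.
Qed.

End Fans.

Section Modifications.
Variables (R : realType) (k : nat) (G : wfan R k) (f : 'rV[R]_k -> R).
Hypothesis f0 : f 0 = 0.

Lemma modif_cone_above_graph_up D T : D 0 ->
  cones (modif G f) T -> graph_up f D `<=` T ->
  exists2 d, cones (divf G f) d /\ D `<=` d & T = graph_up f d.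
Proof.
move=> h0 [[s _ <-]|[d hd <-]] hsub; first by case: (graph_up_not_subset_graph h0 f0 hsub).
by exists d => //; split=> //; move/graph_up_subset: hsub.
Qed.

Lemma modif_cone_above_graph S T :
  cones (modif G f) T -> graph f S `<=` T ->
  (exists2 t, cones G t /\ S `<=` t & T = graph f t) \/
  (exists2 d, cones (divf G f) d /\ S `<=` d & T = graph_up f d).
Proof.
move=> [[t ht <-]|[d hd <-]] hsub; [left; exists t|right; exists d] => //.
  by split=> //; move/graph_subset: hsub.
by split=> //; move/graph_graph_up_subset: hsub.
Qed.

Hypothesis hG0 : forall C, cones G C -> C 0.

Lemma divf_cone0 D : cones (divf G f) D -> D 0.
Proof. by move=> [tau [[htau _] _ hD]]; apply: face0 hD (hG0 htau). Qed.

Lemma wt_modif_graph s : cones G s -> wt (modif G f) (graph f s) = wt G s.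
Proof.
move=> hs /=; rewrite [X in _ + X]fsbig_empty ?addr0; last first.
  move=> d [hd e]; apply: (etilde_notin_graph (C := s) f0); rewrite -e.
  exact: etilde_graph_up (divf_cone0 hd) f0.
by apply: fsbig_unique => // s' [_ /graph_inj].
Qed.

Lemma wt_modif_graph_up d : cones (divf G f) d ->
  wt (modif G f) (graph_up f d) = wt (divf G f) d.
Proof.
move=> hd /=; rewrite [X in X + _]fsbig_empty ?add0r; last first.
  move=> s [_ e]; apply: (etilde_notin_graph (C := s) f0); rewrite e.
  exact: etilde_graph_up (divf_cone0 hd) f0.
by apply: fsbig_unique => // d' [_ /graph_up_inj].
Qed.

End Modifications.

Section OrderOfVanishing.
Variable R : realType.

Definition ord_value k (U : set (set 'rV[R]_k)) (w : set 'rV[R]_k -> int)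
    (nv : set 'rV[R]_k -> 'rV[R]_k) (fm : set 'rV[R]_k -> 'cV[R]_k) (ft : 'cV[R]_k) : R :=
  - (\sum_(s \in U) (w s)%:~R * lform (fm s) (nv s)) + lform ft (\sum_(s \in U) nv s *~ w s).

Definition ord_witness k (G : wfan R k) (f : 'rV[R]_k -> R) (tau : set 'rV[R]_k) (z : int) :=
  exists (nv : set 'rV[R]_k -> 'rV[R]_k) (fm : set 'rV[R]_k -> 'cV[R]_k),
    [/\ (forall s, up G tau s -> nvec s tau (nv s)),
        (forall s, up G tau s \/ s = tau ->
           intmx (fm s) /\ forall x, s x -> f x = lform (fm s) x) &
        z%:~R = ord_value (up G tau) (wt G) nv fm (fm tau)].

Lemma ordE k (G : wfan R k) f tau : ord G f tau = xget 0 [set z | ord_witness G f tau z].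
Proof. by []. Qed.

Lemma ord_value_subl k (U : set (set 'rV[R]_k)) w nv fm ft (l : 'cV[R]_k) :
  finite_set U -> ord_value U w nv (fun s => fm s - l) (ft - l) = ord_value U w nv fm ft.
Proof.
move=> hU; rewrite /ord_value !fsbig_finite //= lformBm.
have lform_wsum (m : 'cV[R]_k) (r : seq (set 'rV[R]_k)) :
    lform m (\sum_(s <- r) nv s *~ w s) = \sum_(s <- r) (w s)%:~R * lform m (nv s).
  by rewrite lform_sum; apply: eq_bigr => s _; rewrite lformMz -mulrzl.
rewrite !lform_wsum; under eq_bigr do rewrite lformBm mulrBr.
rewrite sumrB; lra.
Qed.

End OrderOfVanishing.

Section StarFan.
Variables (R : realType) (n : nat) (F : wfan R n).
Hypothesis hF : fan (cones F).
Variable sigma : set 'rV[R]_n.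
Hypothesis hsigma : cones F sigma.
Variables (k : nat) (p : 'M[R]_(n, k)).
Hypothesis hp : qmap sigma p.
Variable Y : 'M[R]_(k, n).
Hypotheses (hY : intmx Y) (hYp : Y *m p = 1%:M).

Local Notation St := (star F sigma p).
Implicit Types (x : 'rV[R]_n) (t d s : set 'rV[R]_n).

Lemma sigma_ker x : sigma x -> x *m p = 0.
Proof. by move=> hx; have := fan_cone_ker hF hsigma hp hx. Qed.

Lemma ker_diff_sigma x : x *m p = 0 -> exists a b, [/\ sigma a, sigma b & x = a - b].
Proof.
have [s _ es] := fan_cone_gen hF hsigma.
have hps : qmap (cone_gen s) p by rewrite -es.
by rewrite es => /(qmap_ker_span hps) /span_cone_genB.
Qed.

Lemma lform_descend (u : 'cV[R]_n) x : (forall y, sigma y -> lform u y = 0) ->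
  lform (Y *m u) (x *m p) = lform u x.
Proof.
move=> hu; rewrite -lform_mulmx (qmap_factor hp hY hYp) // => y.
by apply: latt_mulmx0 => z hz _; rewrite lformE hu // raddf0.
Qed.

Lemma star_img_subset_inv t1 t2 : cones F t1 -> cones F t2 ->
  sigma `<=` t1 -> sigma `<=` t2 -> img p t1 `<=` img p t2 -> t1 `<=` t2.
Proof.
move=> h1 h2 s1 s2 hi x hx.
have [y hy exy] := hi _ (ex_intro2 _ _ x hx erefl).
have [a [b [ha hb eab]]] : exists a b, [/\ sigma a, sigma b & x - y = a - b].
  by apply: ker_diff_sigma; rewrite mulmxBl exy subrr.
(* x + b lies in t1, and also in t2 as y + a; being in the face t1 :&: t2 of t1
   forces x itself into that face. *)
have hxb1 : t1 (x + b) by apply: (fan_coneD hF) => //; apply: s1.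
have hxb2 : t2 (x + b).
  have -> : x + b = y + a by rewrite -[x](subrK y) eab addrAC subrK addrC.
  by apply: (fan_coneD hF) => //; apply: s2.
case: hF => _ _ _ /(_ _ _ h1 h2) [u [hu eu]].
have : (t1 `&` t2) (x + b) by [].
rewrite eu => -[_]; rewrite lformD => h0.
have ux0 : lform u x = 0.
  by apply/eqP; rewrite eq_le hu // andbT -h0 lerDl hu //; apply: s1.
have : (t1 `&` t2) x by rewrite eu.
by case.
Qed.

Lemma star_img_inj t1 t2 : cones F t1 -> cones F t2 ->
  sigma `<=` t1 -> sigma `<=` t2 -> img p t1 = img p t2 -> t1 = t2.
Proof.
move=> h1 h2 s1 s2 e; apply/seteqP.
by split; apply: star_img_subset_inv => //; rewrite e.
Qed.

Lemma wt_star t : cones F t -> sigma `<=` t -> wt St (img p t) = wt F t.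
Proof.
move=> ht st; apply: wt_star_inj => // t' ht' st'.
exact: star_img_inj.
Qed.

Lemma maxc_star t : cones F t -> sigma `<=` t ->
  maxc (cones St) (img p t) <-> maxc (cones F) t.
Proof.
move=> ht st; split=> -[_ hm].
- split=> // D hD tD; have sD : sigma `<=` D := subset_trans st tD.
  by apply: star_img_inj => //; apply: hm; [exists D|apply: imgS].
- split; first by exists t.
  move=> _ [D [hD sD] <-] tD.
  by rewrite (hm D hD (star_img_subset_inv ht hD st sD tD)).
Qed.

Lemma up_star_cone t s : cones F t -> sigma `<=` t -> up F t s \/ s = t ->
  cones F s /\ sigma `<=` s.
Proof. by move=> ht st [[[hs _] ts]|->] //; split=> //; apply: subset_trans ts. Qed.

Lemma up_star t : cones F t -> sigma `<=` t ->
  up St (img p t) = [set img p s | s in up F t].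
Proof.
move=> ht st; apply/seteqP; split=> X.
- move=> [hX tX]; case: hX.1 => s [hs ss] eX; subst X.
  exists s => //; split; first exact/(maxc_star hs ss).
  exact: star_img_subset_inv tX.
- move=> [s hts <-]; have [hs ss] := up_star_cone ht st (or_introl hts).
  split; last exact: imgS hts.2.
  exact/(maxc_star hs ss)/hts.1.
Qed.

Lemma face_star_img d t : face d t -> sigma `<=` d -> face (img p d) (img p t).
Proof.
move=> [u [hu ed]] sd.
have hu0 y : sigma y -> lform u y = 0 by move=> /sd; rewrite ed => -[].
exists (Y *m u); split.
  by move=> _ [x hx <-]; rewrite lform_descend //; apply: hu.
apply/seteqP; split=> y.
  by move=> [x]; rewrite ed => -[hx hux] <-; split; [exists x|rewrite lform_descend].
by move=> [[x hx <-]]; rewrite lform_descend // => hux; exists x => //; rewrite ed.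
Qed.

Lemma face_star_lift D t : face D (img p t) -> sigma `<=` t ->
  exists d, [/\ face d t, sigma `<=` d & D = img p d].
Proof.
move=> [u [hu eD]] st.
exists [set x | t x /\ lform (p *m u) x = 0]; split.
- by exists (p *m u); split=> // x hx; rewrite lform_mulmx; apply: hu; exists x.
- by move=> x hx; split; [apply: st|rewrite lform_mulmx sigma_ker // lform0].
- rewrite eD; apply/seteqP; split=> y.
    by move=> [[x hx <-] h0]; exists x => //; split; rewrite ?lform_mulmx.
  by move=> [x [hx h0] <-]; split; [exists x|rewrite -lform_mulmx].
Qed.

Lemma face_star_img_iff t s : cones F t -> cones F s -> sigma `<=` t -> sigma `<=` s ->
  face (img p t) (img p s) <-> face t s.
Proof.
move=> ht hs st ss; split=> [|h]; last exact: face_star_img.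
move=> /face_star_lift [] // d [hd sd e].
by rewrite (star_img_inj ht (fan_face hF hs hd) st sd e).
Qed.

Lemma rank_star_img (s0 s : seq 'rV[R]_n) : (forall i : 'I_(size s0), intmx s0`_i) ->
  sigma = cone_gen s0 -> sigma `<=` cone_gen s ->
  (\rank (gens_mx s *m p) + \rank (gens_mx s0) = \rank (gens_mx s))%N.
Proof.
move=> hs0 es0 ss; have hp0 : qmap (cone_gen s0) p by rewrite -es0.
have hker := kermx_qmap hp0 hs0.
have hk : (kermx p <= gens_mx s)%MS.
  apply: submx_trans (proj1 (andP hker)) _.
  by apply: cone_gen_subset_submx; rewrite -es0.
by rewrite -(mxrank_mul_ker (gens_mx s) p) (capmx_idPr hk) (eqmx_rank hker).
Qed.

Lemma facet_star_img_iff t s : cones F t -> cones F s -> sigma `<=` t -> sigma `<=` s ->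
  facet (img p t) (img p s) <-> facet t s.
Proof.
move=> ht hs st ss; have [s0 hs0 es0] := fan_cone_gen hF hsigma.
have [gt _ et] := fan_cone_gen hF ht; have [gs _ es] := fan_cone_gen hF hs.
have rt := rank_star_img hs0 es0 (_ : sigma `<=` cone_gen gt).
have rs := rank_star_img hs0 es0 (_ : sigma `<=` cone_gen gs).
rewrite -et in rt; rewrite -es in rs; have {}rt := rt st; have {}rs := rs ss.
split=> -[hf [r [h1 h2]]].
- split; first exact/(face_star_img_iff ht hs st ss).
  exists (\rank (gens_mx gt)); split; first exact/(has_dimE _ et).
  apply/(has_dimE _ es); move: h1 h2; rewrite et es !has_dim_img => e1 e2.
  lia.
- split; first exact/(face_star_img_iff ht hs st ss).
  exists (r - \rank (gens_mx s0))%N; rewrite et es !has_dim_img.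
  move: h1 h2; rewrite (has_dimE _ et) (has_dimE _ es) => e1 e2.
  split; lia.
Qed.

Lemma codim1_star t : cones F t -> sigma `<=` t ->
  codim1 St (img p t) <-> codim1 F t.
Proof.
move=> ht st; split.
- move=> [_ [S [hS hf]]]; split=> //; case: hS.1 => s [hs ss] eS; subst S.
  exists s; split; first exact/(maxc_star hs ss).
  exact/(facet_star_img_iff ht hs st ss).
- move=> [_ [s [hs hf]]]; have ss : sigma `<=` s := subset_trans st (face_subset hf.1).
  split; first by exists t.
  exists (img p s); split; first by apply/maxc_star => //; case: hs.
  by apply/facet_star_img_iff => //; case: hs.
Qed.

Lemma latt_star_img t y : cones F t -> sigma `<=` t ->
  latt (img p t) y <-> exists x, latt t x /\ y = x *m p.
Proof.
move=> ht st; have [s hs et] := fan_cone_gen hF ht; split; last first.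
  move=> [x [hx ->]]; apply: latt_mulmx hx => w hw hiw.
  by apply: latt_pt; [exists w|apply: intmx_mul => //; case: hp].
move=> hy; apply: (latt_ind (P := fun y => exists x, latt t x /\ y = x *m p) _ _ _ _ hy).
- by exists 0; split; [apply: latt0|rewrite mul0mx].
- move=> _ _ [x1 [h1 ->]] [x2 [h2 ->]]; exists (x1 + x2).
  by split; [apply: lattD|rewrite mulmxDl].
- by move=> _ z [x1 [h1 ->]]; exists (x1 *~ z); split; [apply: lattMz|rewrite mulmxMz].
- move=> _ [w hw <-] hiy; exists (w *m p *m Y); split; last first.
    by rewrite -mulmxA hYp mulmx1.
  rewrite et; apply: intmx_span_latt => //; last exact: intmx_mul.
  (* w p Y - w lies in the kernel of p, i.e. in the span of sigma, inside that of t *)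
  have [a [b [ha hb eab]]] : exists a b, [/\ sigma a, sigma b & w *m p *m Y - w = a - b].
    by apply: ker_diff_sigma; rewrite mulmxBl -(mulmxA (w *m p)) hYp mulmx1 subrr.
  rewrite -(subrK w (w *m p *m Y)) eab; apply: addmx_sub.
    apply: addmx_sub; first by apply: cone_gen_submx; rewrite -et; apply: st.
    by rewrite (eqmx_opp _); apply: cone_gen_submx; rewrite -et; apply: st.
  by apply: cone_gen_submx; rewrite -et.
Qed.

Lemma nvec_star_img s t v : cones F s -> cones F t -> sigma `<=` t -> t `<=` s ->
  nvec s t v -> nvec (img p s) (img p t) (v *m p).
Proof.
move=> hs ht st ts [hv hl [a [b [c [ha hb hc ev]]]]].
have ss : sigma `<=` s := subset_trans st ts.
split.
- by apply: intmx_mul => //; case: hp.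
- move=> y; rewrite (latt_star_img _ hs ss); split.
    move=> [x [hx ->]]; have [y' [m [hy' ->]]] := (hl x).1 hx.
    exists (y' *m p), m; split; first by apply/(latt_star_img _ ht st); exists y'.
    by rewrite mulmxDl mulmxMz.
  move=> [_ [m [/(latt_star_img _ ht st) [y' [hy' ->]] ->]]].
  exists (y' + v *~ m); split; first by apply/hl; exists y', m.
  by rewrite mulmxDl mulmxMz.
- exists (a *m p), (b *m p), (c *m p).
  by split; [exists a|exists b|exists c|rewrite ev mulmxBl mulmxDl].
Qed.

Lemma nvec_star_lift s t v' : cones F s -> cones F t -> sigma `<=` t -> t `<=` s ->
  nvec (img p s) (img p t) v' -> exists v, nvec s t v /\ v *m p = v'.
Proof.
move=> hs ht st ts [hv hl [_ [_ [_ [[a ha <-] [b hb <-] [c hc <-] ev]]]]].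
have ss : sigma `<=` s := subset_trans st ts.
pose z := v' *m Y; have hz : intmx z by apply: intmx_mul.
have ez : z *m p = v' by rewrite -mulmxA hYp mulmx1.
exists z; split=> //; split=> //.
- move=> x; split.
  + move=> hx; have /hl := (latt_star_img _ hs ss).2 (ex_intro _ x (conj hx erefl)).
    move=> [_ [m [/(latt_star_img _ ht st) [y [hy ->]] e]]].
    exists (y + (x - y - z *~ m)), m; split; last by rewrite -addrA subrK addrC subrK.
    apply: lattD => //; apply: lattS st _; apply: (qmap_ker_latt hp).
      by apply: intmxB; [apply: intmxB|apply: intmxMz] => //; apply: latt_intmx;
        [exact: hx|exact: hy].
    by rewrite !mulmxBl e mulmxMz ez [_ + v' *~ m]addrC addrK subrr.
  + move=> [y [m [hy ->]]]; apply: lattD; first exact: lattS ts _.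
    apply: lattMz.
    have /(latt_star_img _ hs ss) [x0 [hx ex]] : latt (img p s) v'.
      by apply/hl; exists 0, 1%Z; split; [apply: latt0|rewrite add0r mulr1z].
    rewrite -(subrK x0 z); apply: lattD => //; apply: lattS ss _.
    apply: (qmap_ker_latt hp); first by apply: intmxB => //; apply: latt_intmx hx.
    by rewrite mulmxBl ez ex subrr.
- have [a1 [b1 [ha1 hb1 e1]]] : exists a1 b1, [/\ sigma a1, sigma b1 & z - (a + b - c) = a1 - b1].
    by apply: ker_diff_sigma; rewrite mulmxBl ez ev !mulmxBl !mulmxDl subrr.
  exists a, (b + a1), (c + b1); split=> //; try by apply: (fan_coneD hF) => //; apply: st.
  have -> : z = (a + b - c) + (a1 - b1) by rewrite -e1 addrC subrK.
  by rewrite opprD addrA -!addrA [- c + _]addrCA.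
Qed.

Variable l : 'cV[R]_n.

Lemma ord_value_star_img (U : set (set 'rV[R]_n)) nv fm ft nv' fm' ft' :
  U `<=` [set s | cones F s /\ sigma `<=` s] -> finite_set U ->
  (forall s, U s -> nv' (img p s) = nv s *m p) ->
  (forall s, U s -> lform (fm' (img p s)) (nv s *m p) = lform (fm s - l) (nv s)) ->
  (forall v, lform ft' (v *m p) = lform (ft - l) v) ->
  ord_value [set img p s | s in U] (wt St) nv' fm' ft' = ord_value U (wt F) nv fm ft.
Proof.
move=> hU fU hnv hfm hft.
have inj : set_inj U (img p).
  move=> a b /set_mem /hU [ha sa] /set_mem /hU [hb sb].
  exact: star_img_inj.
rewrite -(ord_value_subl _ _ _ _ l fU) /ord_value !(fsbig_image _ _ _ inj).
rewrite (eq_fsbigr (fun s => (wt F s)%:~R * lform (fm s - l) (nv s))); last first.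
  by move=> s /set_mem hs; have [h1 h2] := hU _ hs; rewrite wt_star // hnv // hfm.
rewrite (eq_fsbigr (fun s => (nv s *~ wt F s) *m p)); last first.
  by move=> s /set_mem hs; have [h1 h2] := hU _ hs; rewrite wt_star // hnv // mulmxMz.
by rewrite !fsbig_finite //= -mulmx_suml hft.
Qed.

Definition star_preimage (X : set 'rV[R]_k) : set 'rV[R]_n :=
  xget set0 [set t | [/\ cones F t, sigma `<=` t & img p t = X]].

Lemma star_preimage_img t : cones F t -> sigma `<=` t -> star_preimage (img p t) = t.
Proof.
move=> ht st; apply: xget_unique; first by split.
by move=> t' [ht' st' e]; apply: star_img_inj.
Qed.

Variables (f : 'rV[R]_n -> R) (g : 'rV[R]_k -> R).
Hypotheses (hl : intmx l) (hfl : forall x, sigma x -> f x = lform l x).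
Hypothesis hg : forall t, cones F t -> sigma `<=` t ->
  forall x, t x -> g (x *m p) = f x - lform l x.

Lemma ord_witness_star_lift t z : cones F t -> sigma `<=` t ->
  ord_witness St g (img p t) z -> ord_witness F f t z.
Proof.
move=> ht st [nv' [fm' [hnv hfm hz]]].
have hU s : up F t s -> cones F s /\ sigma `<=` s by move=> h; apply: (up_star_cone ht st); left.
have lift s : exists v, up F t s -> nvec s t v /\ v *m p = nv' (img p s).
  case: (pselect (up F t s)) => h; last by exists 0.
  have [hs ss] := hU s h.
  have hX : up St (img p t) (img p s) by rewrite up_star //; exists s.
  by have [v hv] := nvec_star_lift hs ht st h.2 (hnv _ hX); exists v.
have [nv hnv'] := choice lift.
exists nv, (fun s => p *m fm' (img p s) + l); split.
- by move=> s hs; apply: (hnv' s hs).1.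
- move=> s hs; have [hsF ss] := up_star_cone ht st hs.
  have [hi he] : intmx (fm' (img p s)) /\
      forall y, img p s y -> g y = lform (fm' (img p s)) y.
    by apply: hfm; case: hs => [h|->]; [left; rewrite up_star //; exists s|right].
  split; first by apply: intmxD => //; apply: intmx_mul => //; case: hp.
  move=> x hx; rewrite lformDm lform_mulmx -he; last by exists x.
  by rewrite (hg hsF ss hx) subrK.
- rewrite hz up_star //; apply: ord_value_star_img => //; first exact: up_finite.
  + by move=> s hs; rewrite (hnv' s hs).2.
  + by move=> s hs; rewrite addrK lform_mulmx.
  + by move=> v; rewrite addrK lform_mulmx.
Qed.

Lemma ord_witness_star_img t z : cones F t -> sigma `<=` t ->
  ord_witness F f t z -> ord_witness St g (img p t) z.
Proof.
move=> ht st [nv [fm [hnv hfm hz]]].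
have van s : up F t s \/ s = t -> forall x, sigma x -> lform (fm s - l) x = 0.
  move=> hs x hx; have [hsF ss] := up_star_cone ht st hs.
  by rewrite lformBm -(proj2 (hfm s hs)) ?hfl ?subrr //; apply: ss.
exists (fun X => nv (star_preimage X) *m p).
exists (fun X => Y *m (fm (star_preimage X) - l)); split.
- move=> X; rewrite up_star // => -[s hs <-].
  have [hsF ss] := up_star_cone ht st (or_introl hs).
  by rewrite star_preimage_img //; apply: nvec_star_img hsF ht st hs.2 (hnv s hs).
- move=> X hX.
  have [s hs ->] : exists2 s, up F t s \/ s = t & X = img p s.
    case: hX => [|->]; last by exists t; [right|].
    by rewrite up_star // => -[s hs <-]; exists s; [left|].
  have [hsF ss] := up_star_cone ht st hs; rewrite star_preimage_img //.
  split; first by apply: intmx_mul => //; apply: intmxB => //; apply: (hfm s hs).1.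
  move=> _ [x hx <-]; rewrite lform_descend; last exact: van.
  by rewrite (hg hsF ss hx) lformBm -(hfm s hs).2.
- rewrite hz up_star //; symmetry; apply: ord_value_star_img.
  + by move=> s hs; apply: (up_star_cone ht st); left.
  + exact: up_finite.
  + move=> s hs; have [hsF ss] := up_star_cone ht st (or_introl hs).
    by rewrite /= star_preimage_img.
  + move=> s hs; have [hsF ss] := up_star_cone ht st (or_introl hs).
    by rewrite /= star_preimage_img // lform_descend //; apply: van; left.
  + by move=> v; rewrite /= star_preimage_img // lform_descend //; apply: van; right.
Qed.

Lemma ord_star t : cones F t -> sigma `<=` t -> ord St g (img p t) = ord F f t.
Proof.
move=> ht st; rewrite !ordE; congr xget; apply/seteqP; split=> z.
  exact: ord_witness_star_lift.
exact: ord_witness_star_img.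
Qed.

Lemma cones_divf_star :
  cones (divf St g) = [set img p d | d in [set d | cones (divf F f) d /\ sigma `<=` d]].
Proof.
apply/seteqP; split=> X.
- move=> [T [hc ho hfc]]; case: hc.1 => t [ht st] eT; subst T.
  have [d [hd sd ->]] := face_star_lift hfc st.
  exists d => //; split=> //; exists t; split=> //.
    exact/(codim1_star ht st).
  by rewrite -(ord_star ht st).
- move=> [d [[t [hc ho hfc]] sd] <-].
  have st : sigma `<=` t := subset_trans sd (face_subset hfc).
  have ht : cones F t by case: hc.
  exists (img p t); split; [exact/(codim1_star ht st)|by rewrite ord_star|].
  exact: face_star_img.
Qed.

End StarFan.

Section GraphQuotientMaps.
Variables (R : realType) (n k : nat).

Definition proj_quot_mx (p : 'M[R]_(n, k)) : 'M[R]_(n + 1, k) := col_mx p 0.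

Definition proj_quot_inv (Y : 'M[R]_(k, n)) : 'M[R]_(k, n + 1) := Y *m row_mx 1%:M 0.

Definition shear_quot_mx (p : 'M[R]_(n, k)) (l : 'cV[R]_n) : 'M[R]_(n + 1, k + 1) :=
  block_mx p (- l) 0 1%:M.

Definition shear_quot_inv (Y : 'M[R]_(k, n)) (l : 'cV[R]_n) : 'M[R]_(k + 1, n + 1) :=
  col_mx (Y *m row_mx 1%:M l) (row_mx 0 1%:M).

Lemma row_mx_proj_quot p x (c : 'M[R]_1) : row_mx x c *m proj_quot_mx p = x *m p.
Proof. by rewrite mul_row_col mulmx0 addr0. Qed.

Lemma row_mx_shear_quot p l x c :
  row_mx x c%:M *m shear_quot_mx p l = row_mx (x *m p) (c - lform l x)%:M.
Proof. by rewrite mul_row_block mulmx0 addr0 mulmx1 mulmxN lformE raddfB /= addrC. Qed.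

Lemma intmx_shear_quot p l : intmx p -> intmx l -> intmx (shear_quot_mx p l).
Proof. by move=> hp hl; apply: intmx_block; [|apply: intmxN|apply: intmx0|apply: intmx1]. Qed.

Lemma intmx_shear_quot_inv Y l : intmx Y -> intmx l -> intmx (shear_quot_inv Y l).
Proof.
move=> hY hl; apply: intmx_col_mx; last by apply: intmx_row_mx; [apply: intmx0|apply: intmx1].
by apply: intmx_mul => //; apply: intmx_row_mx => //; apply: intmx1.
Qed.

Lemma shear_quot_invK p l Y : Y *m p = 1%:M -> shear_quot_inv Y l *m shear_quot_mx p l = 1%:M.
Proof.
move=> hYp; rewrite mul_col_mx -mulmxA !mul_row_block !mulmx0 !mul0mx !addr0 !add0r !mul1mx.
by rewrite !mulmx1 addNr mul_mx_row hYp mulmx0 -block_mxEv -scalar_mx_block.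
Qed.

Lemma shear_quot_mulK p l Y (y1 : 'rV[R]_n) c :
  row_mx y1 c%:M *m shear_quot_mx p l *m shear_quot_inv Y l - row_mx y1 c%:M =
  row_mx (y1 *m p *m Y - y1) ((y1 *m p *m Y - y1) *m l).
Proof.
rewrite row_mx_shear_quot mul_row_col !mulmxA mul_mx_row mulmx1 mul_scalar_mx.
rewrite scale_row_mx scaler0 scalemx1 add_row_mx addr0 opp_row_mx add_row_mx mulmxBl.
rewrite !lformE; congr row_mx.
by apply/matrixP => i j; rewrite !ord1 !mxE /= !mulr1n; lra.
Qed.

End GraphQuotientMaps.

Section StarOfModificationAtUpperGraph.
Variables (R : realType) (n : nat) (F : wfan R n) (f : 'rV[R]_n -> R).
Hypotheses (hF : fan (cones F)) (hf : meromorphic F f).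
Variable delta : set 'rV[R]_n.
Hypothesis hd : cones (divf F f) delta.
Variables (k : nat) (p : 'M[R]_(n, k)).
Hypothesis hp : qmap delta p.

Let hdF : cones F delta := cones_divf hF hd.
Let f0 : f 0 = 0 := meromorphic0 hF hf hdF.
Let d0 : delta 0 := fan_cone0 hF hdF.

Lemma img_proj_quot_graph_up D : img (proj_quot_mx p) (graph_up f D) = img p D.
Proof.
apply/seteqP; split=> y.
  by move=> [z [x [t [hx _ ->]]] <-]; exists x; rewrite ?row_mx_proj_quot.
move=> [x hx <-]; exists (row_mx x (f x + 0)%:M); first exact: graph_up_pt.
exact: row_mx_proj_quot.
Qed.

Lemma star_img_divf_inj d d' : cones (divf F f) d -> delta `<=` d ->
  cones (divf F f) d' -> delta `<=` d' -> img p d' = img p d -> d' = d.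
Proof.
move=> hd1 sd hd1' sd'; apply: (star_img_inj hF hdF hp) => //.
- exact: cones_divf hd1'.
- exact: cones_divf hd1.
Qed.

Lemma star_modif_graph_up_iso k' (P : 'M[R]_(n + 1, k')) :
  qmap (graph_up f delta) P ->
  fan_iso (star (modif F f) (graph_up f delta) P) (star (divf F f) delta p).
Proof.
move=> hP; have [m [hm hfm]] := hf hdF; have [Y [hY hYp]] := qmap_section hp.
have above := modif_cone_above_graph_up (G := F) f0 d0.
apply: (star_fan_iso (M := proj_quot_mx p) (C := proj_quot_inv Y)) => //.
- by apply: intmx_col_mx; [case: hp|apply: intmx0].
- by apply: intmx_mul => //; apply: intmx_row_mx; [apply: intmx1|apply: intmx0].
- move=> y; apply: latt_mulmx0 => _ [x [t [hx _ ->]]] _.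
  by rewrite row_mx_proj_quot (fan_cone_ker hF hdF hp hx).
- by rewrite -mulmxA mul_row_col mul1mx mulmx0 addr0 hYp.
- move=> y hy; rewrite -[y]hsubmxK row_mx_proj_quot mulmxA mul_mx_row mulmx1 mulmx0.
  rewrite opp_row_mx add_row_mx add0r.
  have -> : - rsubmx y = (- rsubmx y 0 0)%:M by rewrite {1}(mx11_scalar (- rsubmx y)) mxE.
  apply: (latt_graph_up hm hfm d0); first exact/qmap_section_latt/intmx_lsubmx.
  by rewrite rpredN; apply: intmx_rsubmx.
- move=> T T' hT sT hT' sT'.
  have [d [hd1 sd] ->] := above _ hT sT; have [d' [hd1' sd'] ->] := above _ hT' sT'.
  by rewrite !img_proj_quot_graph_up => /star_img_divf_inj -> //.
- apply/seteqP; split.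
    move=> _ [d [hd1 sd] <-]; exists (graph_up f d); last exact: img_proj_quot_graph_up.
    by split; [right; exists d|apply/graph_up_subset].
  move=> _ [T [hT sT] <-]; have [d hd1 ->] := above _ hT sT.
  by exists d; rewrite ?img_proj_quot_graph_up.
- move=> T hT sT; have [d [hd1 sd] ->] := above _ hT sT.
  rewrite img_proj_quot_graph_up (wt_modif_graph_up f0 (fan_cone0 hF) hd1).
  by apply: wt_star_inj => // d' hd' sd'; apply: star_img_divf_inj.
Qed.

End StarOfModificationAtUpperGraph.

Section StarOfModificationAtGraph.
Variables (R : realType) (n : nat) (F : wfan R n) (f : 'rV[R]_n -> R).
Hypotheses (hF : fan (cones F)) (hf : meromorphic F f).
Variables (sigma : set 'rV[R]_n) (l : 'cV[R]_n).
Hypotheses (hs : cones F sigma) (hl : intmx l) (hfl : forall x, sigma x -> f x = lform l x).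
Variables (k : nat) (p : 'M[R]_(n, k)) (g : 'rV[R]_k -> R).
Hypothesis hp : qmap sigma p.
Hypothesis hg : forall tau, cones F tau -> sigma `<=` tau ->
  forall x, tau x -> g (x *m p) = f x - lform l x.

Local Notation St := (star F sigma p).
Local Notation M := (shear_quot_mx p l).

Let f0 : f 0 = 0 := meromorphic0 hF hf hs.

Lemma img_fan_cone0 t : cones F t -> img p t 0.
Proof. by move=> ht; exists 0; rewrite ?mul0mx //; apply: fan_cone0 ht. Qed.

Lemma star_cone0 X : cones St X -> X 0.
Proof. by move=> [t [ht _] <-]; apply: img_fan_cone0. Qed.

Lemma induced_fun0 : g 0 = 0.
Proof.
have s0 := fan_cone0 hF hs.
by have := hg hs (@subset_refl _ _) s0; rewrite mul0mx f0 lform0 subrr.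
Qed.

Lemma img_shear_quot_graph t : cones F t -> sigma `<=` t ->
  img M (graph f t) = graph g (img p t).
Proof.
move=> ht st; apply/seteqP; split=> y.
  move=> [_ [x [hx ->]] <-]; exists (x *m p).
  by rewrite row_mx_shear_quot (hg ht st hx); split=> //; exists x.
move=> [_ [[x hx <-] ->]]; exists (row_mx x (f x)%:M); first exact: graph_pt.
by rewrite row_mx_shear_quot (hg ht st hx).
Qed.

Lemma img_shear_quot_graph_up t : cones F t -> sigma `<=` t ->
  img M (graph_up f t) = graph_up g (img p t).
Proof.
move=> ht st; apply/seteqP; split=> y.
  move=> [_ [x [c [hx hc ->]]] <-]; exists (x *m p), c.
  by rewrite row_mx_shear_quot (hg ht st hx) addrAC; split=> //; exists x.
move=> [_ [c [[x hx <-] hc ->]]]; exists (row_mx x (f x + c)%:M); first exact: graph_up_pt.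
by rewrite row_mx_shear_quot (hg ht st hx) addrAC.
Qed.

Lemma img_shear_quot_inj T T' :
  cones (modif F f) T -> graph f sigma `<=` T ->
  cones (modif F f) T' -> graph f sigma `<=` T' ->
  img M T' = img M T -> T' = T.
Proof.
have inj := star_img_inj hF hs hp.
move=> hT sT hT' sT'.
case: (modif_cone_above_graph hT sT) => -[t [ht st] ->];
case: (modif_cone_above_graph hT' sT') => -[t' [ht' st'] ->].
- by rewrite !img_shear_quot_graph // => /graph_inj /inj -> //.
- have ht'F := cones_divf hF ht'.
  rewrite img_shear_quot_graph // img_shear_quot_graph_up // => e.
  by case: (graph_up_neq_graph (img_fan_cone0 ht'F) induced_fun0 e).
- have htF := cones_divf hF ht.
  rewrite img_shear_quot_graph // img_shear_quot_graph_up // => /esym e.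
  by case: (graph_up_neq_graph (img_fan_cone0 htF) induced_fun0 e).
- have htF := cones_divf hF ht; have ht'F := cones_divf hF ht'.
  by rewrite !img_shear_quot_graph_up // => /graph_up_inj /inj -> //.
Qed.

Variable Y : 'M[R]_(k, n).
Hypotheses (hY : intmx Y) (hYp : Y *m p = 1%:M).

Lemma cones_modif_star :
  cones (modif St g) = [set img M T | T in [set T | cones (modif F f) T /\ graph f sigma `<=` T]].
Proof.
have -> : cones (modif St g) =
    [set graph g X | X in cones St] `|` [set graph_up g X | X in cones (divf St g)] by [].
rewrite (cones_divf_star hF hs hp hY hYp hl hfl hg); apply/seteqP; split.
  move=> _ [[_ [t [ht st] <-] <-]|[_ [d [hd sd] <-] <-]].
    exists (graph f t); last exact: img_shear_quot_graph.
    by split; [left; exists t|apply/graph_subset].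
  exists (graph_up f d); last exact: img_shear_quot_graph_up (cones_divf hF hd) sd.
  by split; [right; exists d|apply/graph_graph_up_subset].
move=> _ [T [hT sT] <-]; case: (modif_cone_above_graph hT sT) => -[t [ht st] ->].
  by left; exists (img p t); [exists t|rewrite img_shear_quot_graph].
have htF := cones_divf hF ht.
by right; exists (img p t); [exists t|rewrite img_shear_quot_graph_up].
Qed.

Lemma wt_modif_star T : cones (modif F f) T -> graph f sigma `<=` T ->
  wt (modif St g) (img M T) = wt (modif F f) T.
Proof.
move=> hT sT; case: (modif_cone_above_graph hT sT) => -[t [ht st] ->].
  rewrite img_shear_quot_graph // (wt_modif_graph induced_fun0 star_cone0); last by exists t.
  by rewrite (wt_modif_graph f0 (fan_cone0 hF) ht) (wt_star hF hs hp ht st).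
have htF := cones_divf hF ht.
rewrite img_shear_quot_graph_up // (wt_modif_graph_up induced_fun0 star_cone0); last first.
  by rewrite (cones_divf_star hF hs hp hY hYp hl hfl hg); exists t.
rewrite (wt_modif_graph_up f0 (fan_cone0 hF) ht).
exact: (ord_star hF hs hp hY hYp hl hfl hg htF st).
Qed.

Lemma star_modif_graph_iso k' (P : 'M[R]_(n + 1, k')) :
  qmap (graph f sigma) P -> fan_iso (star (modif F f) (graph f sigma) P) (modif St g).
Proof.
move=> hP; apply: (star_fan_iso (M := M) (C := shear_quot_inv Y l)) => //.
- by apply: intmx_shear_quot => //; case: hp.
- exact: intmx_shear_quot_inv.
- move=> y; apply: latt_mulmx0 => _ [x [hx ->]] _.
  by rewrite row_mx_shear_quot (sigma_ker hF hs hp hx) hfl // subrr raddf0 row_mx0.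
- exact: shear_quot_invK.
- move=> y hy; rewrite -[y]hsubmxK (mx11_scalar (rsubmx y)) shear_quot_mulK.
  exact/(latt_graph hl hfl)/qmap_section_latt/intmx_lsubmx.
- exact: img_shear_quot_inj.
- exact: cones_modif_star.
- exact: wt_modif_star.
Qed.

End StarOfModificationAtGraph.

Theorem proposition2p3 (R : realType) (n d : nat) (F : wfan R n)
    (f : 'rV[R]_n -> R) :
  tropical_fan F d -> meromorphic F f ->
  (forall delta, cones (divf F f) delta ->
     forall k (p : 'M[R]_(n + 1, k)), qmap (graph_up f delta) p ->
     forall k' (p' : 'M[R]_(n, k')), qmap delta p' ->
     fan_iso (star (modif F f) (graph_up f delta) p) (star (divf F f) delta p'))
  /\
  (forall sigma, cones F sigma ->
     forall l : 'cV[R]_n, intmx l -> (forall x, sigma x -> f x = lform l x) ->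
     forall k (p : 'M[R]_(n + 1, k)), qmap (graph f sigma) p ->
     forall k' (p' : 'M[R]_(n, k')), qmap sigma p' ->
     forall g : 'rV[R]_k' -> R,
       (forall tau, cones F tau -> sigma `<=` tau ->
          forall x, tau x -> g (x *m p') = f x - lform l x) ->
     fan_iso (star (modif F f) (graph f sigma) p) (modif (star F sigma p') g)).
Proof.
move=> [hF _ _] hf; split.
- move=> delta hd k p hp k' p' hp'.
  exact: (star_modif_graph_up_iso hF hf hd hp' hp).
- move=> sigma hs l hl hfl k p hp k' p' hp' g hg.
  have [Y [hY hYp]] := qmap_section hp'.
  exact: (star_modif_graph_iso hF hf hs hl hfl hp' hg hY hYp hp).
Qed.
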